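(* Let $(I,\le)$ be a directed partially ordered set and let $(R_i,\varphi_{ij})_{i\le j}$ be a directed system of rings and ring homomorphisms indexed by $I$ (so $\varphi_{ii}=\mathrm{id}$ and $\varphi_{jk}\circ\varphi_{ij}=\varphi_{ik}$ for $i\le j\le k$). If each $R_i$ satisfies the irreducible intersection property, then $\operatorname{colim}_{i\in I}R_i$ satisfies the irreducible intersection property.
   Context: All rings are commutative with $1$. A ring $R$ satisfies the irreducible intersection property if for any prime ideals $p_1,p_2\subset R$, either $p_1+p_2=R$ or $p_1+p_2$ is a prime ideal. A partially ordered set $I$ is directed if for all $i,j\in I$ there is $k\in I$ with $i,j\le k$. *)

(* Rings: comPzRingType (commutative with 1, zero ring allowed). *)
From HB Require Import structures.
From mathcomp Require Import all_boot all_order all_algebra.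
Set Implicit Arguments. Unset Strict Implicit. Unset Printing Implicit Defensive.
Import GRing.Theory.
Local Open Scope ring_scope.

Definition is_ideal (R : comPzRingType) (P : R -> Prop) : Prop :=
  P 0 /\ (forall a b, P a -> P b -> P (a + b)) /\ (forall r a, P a -> P (r * a)).

Definition is_prime_ideal (R : comPzRingType) (P : R -> Prop) : Prop :=
  is_ideal P /\ ~ P 1 /\ (forall a b, P (a * b) -> P a \/ P b).

Definition ideal_sum (R : comPzRingType) (P Q : R -> Prop) : R -> Prop :=
  fun x => exists a b, P a /\ Q b /\ x = a + b.

Definition irreducible_intersection_property (R : comPzRingType) : Prop :=
  forall p1 p2 : R -> Prop, is_prime_ideal p1 -> is_prime_ideal p2 ->
    (forall x, ideal_sum p1 p2 x) \/ is_prime_ideal (ideal_sum p1 p2).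

Definition directed_poset (I : Type) (le : I -> I -> Prop) : Prop :=
  (forall i, le i i) /\
  (forall i j k, le i j -> le j k -> le i k) /\
  (forall i j, le i j -> le j i -> i = j) /\
  (forall i j, exists k, le i k /\ le j k).

Definition directed_system (I : Type) (le : I -> I -> Prop)
    (R : I -> comPzRingType)
    (phi : forall i j, le i j -> {rmorphism R i -> R j}) : Prop :=
  (forall i (h : le i i) (x : R i), phi i i h x = x) /\
  (forall i j k (hij : le i j) (hjk : le j k) (hik : le i k) (x : R i),
      phi j k hjk (phi i j hij x) = phi i k hik x).

Definition compatible_cocone (I : Type) (le : I -> I -> Prop)
    (R : I -> comPzRingType)
    (phi : forall i j, le i j -> {rmorphism R i -> R j})
    (S : comPzRingType) (g : forall i, {rmorphism R i -> S}) : Prop :=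
  forall i j (hij : le i j) (x : R i), g j (phi i j hij x) = g i x.

Definition is_colimit (I : Type) (le : I -> I -> Prop)
    (R : I -> comPzRingType)
    (phi : forall i j, le i j -> {rmorphism R i -> R j})
    (L : comPzRingType) (f : forall i, {rmorphism R i -> L}) : Prop :=
  compatible_cocone phi f /\
  forall (S : comPzRingType) (g : forall i, {rmorphism R i -> S}),
    compatible_cocone phi g ->
    exists h : {rmorphism L -> S},
      (forall i (x : R i), h (f i x) = g i x) /\
      (forall h' : {rmorphism L -> S},
         (forall i (x : R i), h' (f i x) = g i x) -> forall y, h' y = h y).

(* The proof rests on one transfer principle (iip_of_lifts): a ring B has
   the IIP as soon as any four elements of B are simultaneously the images,
   under a ring morphism g : A -> B, of elements of some ring A having the
   IIP.  Indeed, if 1 \notin p1 + p2 and a * b = u + v with u \in p1,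
   v \in p2, then pulling p1, p2 back along g gives primes of A whose sum
   contains the lift of a * b but not 1, hence is prime in A, so the lift of
   a or of b lies in it and its image lies in p1 + p2.

   For a colimit L of a directed system (R_i), every element of L is either
   an integer multiple of 1 or the image of an element of some R_i
   (colimit_elements): the subring of such elements receives a compatible
   cocone, and the uniqueness part of the universal property forces it to be
   all of L.  When I is nonempty, directedness then puts four elements at a
   common stage R_k, which has the IIP; when I is empty, L is a quotient of
   int, and int has the IIP (int_iip). *)
From HB Require Import structures.
From mathcomp Require Import all_boot all_order all_algebra.
From Stdlib Require Import Classical ClassicalEpsilon.
Set Implicit Arguments. Unset Strict Implicit. Unset Printing Implicit Defensive.
Import GRing.Theory.
Local Open Scope ring_scope.

Lemma prime_ideal_ext (R : comPzRingType) (P Q : R -> Prop) :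
  (forall x, P x <-> Q x) -> is_prime_ideal Q -> is_prime_ideal P.
Proof.
move=> e [[h0 [hD hM]] [h1 hp]]; split; [split; [|split]|split].
- by apply/e.
- by move=> a b /e ha /e hb; apply/e; auto.
- by move=> r a /e ha; apply/e; auto.
- by move/e.
- by move=> a b /e /hp [] ?; [left|right]; apply/e.
Qed.

Lemma ideal_sum_is_ideal (R : comPzRingType) (P Q : R -> Prop) :
  is_ideal P -> is_ideal Q -> is_ideal (ideal_sum P Q).
Proof.
move=> [p0 [pD pM]] [q0 [qD qM]]; split; [|split].
- by exists 0, 0; rewrite addr0.
- move=> x y [a [b [pa [qb ->]]]] [c [d [pc [qd ->]]]].
  exists (a + c), (b + d); split; [exact: pD|split; [exact: qD|]].
  by rewrite addrACA.
- move=> r x [a [b [pa [qb ->]]]]; exists (r * a), (r * b).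
  by split; [exact: pM|split; [exact: qM|rewrite mulrDr]].
Qed.

Lemma ideal_sum_comm (R : comPzRingType) (P Q : R -> Prop) x :
  ideal_sum P Q x <-> ideal_sum Q P x.
Proof. by split=> -[a [b [pa [qb ->]]]]; exists b, a; rewrite addrC. Qed.

Lemma ideal_sum_absorb (R : comPzRingType) (P Q : R -> Prop) :
  is_ideal P -> is_ideal Q -> (forall x, P x -> Q x) ->
  forall x, ideal_sum P Q x <-> Q x.
Proof.
move=> [p0 _] [_ [qD _]] sPQ x; split.
- by move=> [a [b [pa [qb ->]]]]; apply: qD => //; apply: sPQ.
- by move=> qx; exists 0, x; rewrite add0r.
Qed.

Lemma ideal_sum_full (R : comPzRingType) (P Q : R -> Prop) :
  is_ideal P -> is_ideal Q -> ideal_sum P Q 1 -> forall x, ideal_sum P Q x.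
Proof.
move=> [_ [_ pM]] [_ [_ qM]] [a [b [pa [qb e]]]] x.
exists (x * a), (x * b); split; [exact: pM|split; [exact: qM|]].
by rewrite -mulrDr -e mulr1.
Qed.

Lemma prime_ideal_preimage (A B : comPzRingType) (g : {rmorphism A -> B})
    (p : B -> Prop) :
  is_prime_ideal p -> is_prime_ideal (fun x => p (g x)).
Proof.
move=> [[h0 [hD hM]] [h1 hp]]; split; [split; [|split]|split] => /=.
- by rewrite rmorph0.
- by move=> a b ha hb; rewrite rmorphD; auto.
- by move=> r a ha; rewrite rmorphM; auto.
- by rewrite rmorph1.
- by move=> a b; rewrite rmorphM => /hp.
Qed.

Lemma ideal_sum_preimage (A B : comPzRingType) (g : {rmorphism A -> B})
    (p1 p2 : B -> Prop) x :
  ideal_sum (fun y => p1 (g y)) (fun y => p2 (g y)) x -> ideal_sum p1 p2 (g x).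
Proof. by move=> [c [d [pc [pd ->]]]]; exists (g c), (g d); rewrite rmorphD. Qed.

Lemma ideal_sum_prime_on_image (A B : comPzRingType) (g : {rmorphism A -> B})
    (p1 p2 : B -> Prop) :
  irreducible_intersection_property A -> is_prime_ideal p1 ->
  is_prime_ideal p2 -> ~ ideal_sum p1 p2 1 ->
  forall a b u v : A, p1 (g u) -> p2 (g v) -> g a * g b = g u + g v ->
  ideal_sum p1 p2 (g a) \/ ideal_sum p1 p2 (g b).
Proof.
move=> hA H1 H2 not1 a b u v pu pv e.
have pab : ideal_sum (fun x => p1 (g x)) (fun x => p2 (g x)) (a * b).
  exists (a * b - v), v; split; last by rewrite subrK.
  by rewrite rmorphB rmorphM e addrK.
have [full|[_ [_ prime_ab]]] :=
  hA _ _ (prime_ideal_preimage g H1) (prime_ideal_preimage g H2).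
- by case: not1; rewrite -(rmorph1 g); apply: ideal_sum_preimage.
- by case: (prime_ab _ _ pab) => h; [left|right]; apply: ideal_sum_preimage.
Qed.

Lemma iip_of_lifts (B : comPzRingType) :
  (forall a b u v : B, exists (A : comPzRingType) (g : {rmorphism A -> B})
     (xa xb xu xv : A), irreducible_intersection_property A /\
     a = g xa /\ b = g xb /\ u = g xu /\ v = g xv) ->
  irreducible_intersection_property B.
Proof.
move=> lifts p1 p2 H1 H2.
have [[I1 _] [I2 _]] := (H1, H2).
have [has1|not1] := classic (ideal_sum p1 p2 1).
  by left; apply: ideal_sum_full.
right; split; first exact: ideal_sum_is_ideal.
split=> // a b [u [v [pu [pv e]]]].
have [A [g [xa [xb [xu [xv [hA [ea [eb [eu ev]]]]]]]]]] := lifts a b u v.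
subst a b u v.
exact: (ideal_sum_prime_on_image hA H1 H2 not1 pu pv e).
Qed.

Lemma int_prime_ideal_has_prime (P : int -> Prop) : is_prime_ideal P ->
  forall m : nat, (0 < m)%N -> P m%:Z -> exists q, prime q /\ P q%:Z.
Proof.
move=> [_ [P1 Pprime]].
elim/ltn_ind => m IH m_gt0 Pm.
have [m_le1|m_gt1] := leqP m 1.
  have m1 : m = 1%N by apply/eqP; rewrite eqn_leq m_le1 m_gt0.
  by rewrite m1 in Pm.
move: Pm; rewrite -(divnK (pdiv_dvd m)) PoszM => /Pprime [Pd|Pq].
- have pdiv_gt1 : (1 < pdiv m)%N by apply/prime_gt1/pdiv_prime.
  apply: (IH _ _ _ Pd); first exact: ltn_Pdiv.
  by rewrite divn_gt0 ?pdiv_gt0 // dvdn_leq // pdiv_dvd.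
- by exists (pdiv m); split=> //; apply: pdiv_prime.
Qed.

Lemma int_prime_ideal_cases (P : int -> Prop) : is_prime_ideal P ->
  (forall x, P x -> x = 0) \/
  exists q, prime q /\ forall x, P x <-> (q%:Z %| x)%Z.
Proof.
move=> HP; have [[_ [PD PM]] [P1 _]] := HP.
have [[n [n_nz Pn]]|Pzero] := classic (exists n, n != 0 /\ P n); last first.
  by left=> x Px; apply: NNPP => /eqP x_nz; apply: Pzero; exists x.
right.
have Pabs : P (`|n|%N)%:Z by rewrite abszEsign; apply: PM.
have n_gt0 : (0 < `|n|)%N by rewrite absz_gt0.
have [q [q_prime Pq]] := int_prime_ideal_has_prime HP n_gt0 Pabs.
exists q; split=> // x; split=> [Px|/dvdzP [c ->]]; last exact: PM.
apply: NNPP => q_ndvd_x.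
have /eqP coprime_qx : coprimez q x by rewrite coprimezE prime_coprime //; apply/negP.
have [u [v bezout]] := Bezoutz q x.
by apply: P1; rewrite -coprime_qx -bezout; apply: PD; apply: PM.
Qed.

(* The ring of integers has the IIP: if P or Q is zero, or P = Q, then
   P + Q is the larger of the two; otherwise P = qZ and Q = rZ for distinct
   primes q, r, which are comaximal by Bezout. *)
Lemma int_iip : irreducible_intersection_property int.
Proof.
move=> P Q HP HQ.
have [[IP _] [IQ _]] := (HP, HQ).
have sum_is (S : int -> Prop) : is_prime_ideal S ->
    (forall x, ideal_sum P Q x <-> S x) ->
    (forall x, ideal_sum P Q x) \/ is_prime_ideal (ideal_sum P Q).
  by move=> HS e; right; apply: prime_ideal_ext e HS.
have [Pzero|[q [q_prime Pq]]] := int_prime_ideal_cases HP.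
  apply: (sum_is Q HQ); apply: ideal_sum_absorb => // x /Pzero ->.
  by case: IQ.
have [Qzero|[r [r_prime Qr]]] := int_prime_ideal_cases HQ.
  apply: (sum_is P HP) => x; rewrite ideal_sum_comm.
  by apply: ideal_sum_absorb => // y /Qzero ->; case: IP.
have [eq_qr|neq_qr] := eqVneq q r.
  apply: (sum_is Q HQ); apply: ideal_sum_absorb => // x /Pq.
  by rewrite eq_qr => /Qr.
left; apply: ideal_sum_full => //.
have /eqP coprime_qr : coprimez q r.
  by rewrite coprimezE /= prime_coprime // dvdn_prime2.
have [u [v bezout]] := Bezoutz q r.
exists (u * q%:Z), (v * r%:Z); split; first by apply/Pq/dvdz_mull/dvdzz.
by split; [apply/Qr/dvdz_mull/dvdzz | rewrite bezout coprime_qr].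
Qed.

(* A classical boolean reflection of a proposition, needed to describe a
   subring of L by a boolean predicate. *)
Definition propb (P : Prop) : bool :=
  if excluded_middle_informative P then true else false.

Lemma propbP (P : Prop) : reflect P (propb P).
Proof. by rewrite /propb; case: excluded_middle_informative => h; constructor. Qed.

Section DirectedColimit.
Variables (I : Type) (le : I -> I -> Prop) (R : I -> comPzRingType)
  (phi : forall i j, le i j -> {rmorphism R i -> R j})
  (L : comPzRingType) (f : forall i, {rmorphism R i -> L}).
Hypothesis upper_bound : forall i j, exists k, le i k /\ le j k.
Hypothesis colim : is_colimit phi f.

Let cocone : compatible_cocone phi f := colim.1.

Definition from_stage (y : L) : Prop :=
  (exists n : int, y = n%:~R) \/ (exists i (x : R i), y = f i x).

Lemma common_stage i j (x : R i) (z : R j) :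
  exists k (x' z' : R k), f i x = f k x' /\ f j z = f k z'.
Proof.
have [k [hik hjk]] := upper_bound i j.
by exists k, (phi hik x), (phi hjk z); rewrite !cocone.
Qed.

Lemma from_stage_pair y1 y2 : from_stage y1 -> from_stage y2 ->
  (exists m n : int, y1 = m%:~R /\ y2 = n%:~R) \/
  (exists k (x1 x2 : R k), y1 = f k x1 /\ y2 = f k x2).
Proof.
move=> [[m ->]|[i [x ->]]] [[n ->]|[j [z ->]]].
- by left; exists m, n.
- by right; exists j, m%:~R, z; rewrite rmorph_int.
- by right; exists i, x, n%:~R; rewrite rmorph_int.
- by right; apply: common_stage.
Qed.

Definition from_stage_pred : pred L := fun y => propb (from_stage y).

Lemma from_stage_subring : subring_closed from_stage_pred.
Proof.
split; first by apply/propbP; left; exists 1.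
- move=> a b /propbP ha /propbP hb; apply/propbP.
  case: (from_stage_pair ha hb) => [[m [n [-> ->]]]|[k [x1 [x2 [-> ->]]]]].
  + by left; exists (m - n); rewrite intrB.
  + by right; exists k, (x1 - x2); rewrite rmorphB.
- move=> a b /propbP ha /propbP hb; apply/propbP.
  case: (from_stage_pair ha hb) => [[m [n [-> ->]]]|[k [x1 [x2 [-> ->]]]]].
  + by left; exists (m * n); rewrite intrM.
  + by right; exists k, (x1 * x2); rewrite rmorphM.
Qed.

HB.instance Definition _ :=
  GRing.isSubringClosed.Build L from_stage_pred from_stage_subring.

Definition S := {y : L | from_stage_pred y}.
HB.instance Definition _ := [isSub of S for (@sval L from_stage_pred)].
HB.instance Definition _ := [Choice of S by <:].
HB.instance Definition _ :=
  GRing.SubChoice_isSubComPzRing.Build L from_stage_pred S from_stage_subring.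

Lemma from_stage_image i (x : R i) : from_stage_pred (f i x).
Proof. by apply/propbP; right; exists i, x. Qed.

Definition to_S i (x : R i) : S := exist _ (f i x) (from_stage_image x).

Section ToSMorphism.
Variable i : I.
Lemma to_S_zmod : zmod_morphism (@to_S i).
Proof. by move=> a b; apply: val_inj; rewrite /= rmorphB. Qed.
Lemma to_S_monoid : monoid_morphism (@to_S i).
Proof.
by split=> [|a b]; apply: val_inj; rewrite /= ?rmorph1 ?rmorphM.
Qed.
HB.instance Definition _ := GRing.isZmodMorphism.Build (R i) S (@to_S i) to_S_zmod.
HB.instance Definition _ :=
  GRing.isMonoidMorphism.Build (R i) S (@to_S i) to_S_monoid.
End ToSMorphism.

Lemma to_S_cocone : compatible_cocone phi to_S.
Proof. by move=> i j hij x; apply: val_inj => /=; apply: cocone. Qed.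

(* S is all of L: the inclusion S -> L composed with the mediating map
   L -> S agrees with the identity on every stage, hence is the identity. *)
Lemma colimit_elements (y : L) : from_stage y.
Proof.
have [r [r_f _]] := colim.2 _ to_S to_S_cocone.
have [h [_ unique_h]] := colim.2 _ f cocone.
pose incl_r : {rmorphism L -> L} := (val \o r)%FUN.
have incl_r_id : incl_r y = y.
  rewrite (unique_h incl_r) -?(unique_h idfun) // => i x.
  by rewrite /incl_r /= r_f.
by rewrite -incl_r_id; apply/propbP/(valP (r y)).
Qed.

Lemma colimit_lifts_four (stage_iip : forall i, irreducible_intersection_property (R i))
    (y1 y2 y3 y4 : L) :
  exists (A : comPzRingType) (g : {rmorphism A -> L}) (x1 x2 x3 x4 : A),
    irreducible_intersection_property A /\
    y1 = g x1 /\ y2 = g x2 /\ y3 = g x3 /\ y4 = g x4.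
Proof.
have [[i0 _]|I_empty] := classic (exists i : I, True).
- have at_stage y : exists k (x : R k), y = f k x.
    case: (colimit_elements y) => [[n ->]|//].
    by exists i0, n%:~R; rewrite rmorph_int.
  have stage2 (ya yb : L) : exists k (xa xb : R k), ya = f k xa /\ yb = f k xb.
    have [[i [xa ->]] [j [xb ->]]] := (at_stage ya, at_stage yb).
    exact: common_stage.
  have [k1 [a1 [a2 [e1 e2]]]] := stage2 y1 y2.
  have [k2 [b3 [b4 [e3 e4]]]] := stage2 y3 y4.
  have [k [h1 h2]] := upper_bound k1 k2.
  exists (R k), (f k), (phi h1 a1), (phi h1 a2), (phi h2 b3), (phi h2 b4).
  by split; [exact: stage_iip | rewrite !cocone].
- have integer (y : L) : exists n : int, y = n%:~R.
    by case: (colimit_elements y) => [//|[i _]]; case: I_empty; exists i.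
  have [[n1 e1] [n2 e2]] := (integer y1, integer y2).
  have [[n3 e3] [n4 e4]] := (integer y3, integer y4).
  by exists int, ( *~%R (1 : L) : {rmorphism int -> L}), n1, n2, n3, n4;
    split; [exact: int_iip |].
Qed.
End DirectedColimit.

Theorem mainTheorem12 (I : Type) (le : I -> I -> Prop)
    (R : I -> comPzRingType)
    (phi : forall i j, le i j -> {rmorphism R i -> R j})
    (L : comPzRingType) (f : forall i, {rmorphism R i -> L}) :
  directed_poset le ->
  directed_system phi ->
  (forall i, irreducible_intersection_property (R i)) ->
  is_colimit phi f ->
  irreducible_intersection_property L.
Proof.
move=> [_ [_ [_ upper_bound]]] _ stage_iip colim.
apply: iip_of_lifts => a b u v.
exact: colimit_lifts_four upper_bound colim stage_iip a b u v.
Qed.
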